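(* For every unit vector $|\psi\rangle$ with reduced-state eigenvalues $p_1,\dots,p_d$, one has $\mathcal{E}_\star(\psi)=E_L(\psi)$ if and only if the quantity $\big|\sum_{i=1}^d\lambda_ip_{\sigma(i)}\big|$ takes the same value for all permutations $\sigma\in S_d$, where $\lambda_i=e^{i\theta_i}$ is the stellar spectrum. In particular, for $d=2$ and $d=3$, $\mathcal{E}_\star(\psi)=E_L(\psi)$ for all pure states $|\psi\rangle$.
   Context: Let $d=d_A\le d_B$, $d\ge 2$. The stellar spectrum is $\lambda_j=e^{i\theta_j}$, $\theta_j=\frac{(d-2j+1)\pi}{d}$, $j=1,\dots,d$. The stellar mirror entanglement is $\mathcal{E}_\star(\psi)=1-\max_W|\langle\psi|(W\otimes\mathbb{1})|\psi\rangle|^2$, the maximum over all unitaries $W$ on $\mathbb{C}^{d_A}$ whose eigenvalues are exactly the stellar spectrum. The linear entropy of entanglement is $E_L(\psi)=\frac{d}{d-1}\big(1-\sum_ip_i^2\big)$, where $p_i$ are the eigenvalues of $\mathrm{Tr}_B|\psi\rangle\langle\psi|$. *)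

(* Complex numbers: an arbitrary numClosedFieldType C
   (e.g. the complex numbers); algC is one instance. *)
From HB Require Import structures.
From mathcomp Require Import all_boot all_order all_fingroup all_algebra.
Set Implicit Arguments. Unset Strict Implicit. Unset Printing Implicit Defensive.
Import Order.TTheory GRing.Theory Num.Theory.
Local Open Scope ring_scope.

Section Defs.
Variable C : numClosedFieldType.

Definition adjmx m n (A : 'M[C]_(m, n)) : 'M[C]_(n, m) :=
  \matrix_(i, j) (A j i)^*.

(* decomposition of an index of C^{dA} (x) C^{dB} = C^{dA*dB};
   the index of the basis vector |i> (x) |j> is mxvec_index i j *)
Definition idx_pair dA dB (k : 'I_(dA * dB)) : 'I_dA * 'I_dB :=
  enum_val (cast_ord (esym (@mxvec_cast dA dB)) k).

Definition kron dA dB (A : 'M[C]_dA) (B : 'M[C]_dB) : 'M[C]_(dA * dB) :=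
  \matrix_(k, l) (A (idx_pair k).1 (idx_pair l).1 * B (idx_pair k).2 (idx_pair l).2).

Definition ptraceB dA dB (M : 'M[C]_(dA * dB)) : 'M[C]_dA :=
  \matrix_(i, i') \sum_(j < dB) M (mxvec_index i j) (mxvec_index i' j).

Definition unit_vec n (psi : 'cV[C]_n) : Prop := (adjmx psi *m psi) 0 0 = 1.

Definition rhoA dA dB (psi : 'cV[C]_(dA * dB)) : 'M[C]_dA :=
  ptraceB (psi *m adjmx psi).

(* stellar spectrum, 0-based: lambda_(j+1) = exp(i (d - 2(j+1) + 1) pi / d)
   = w ^ (d - 2j - 1) with w = d.-root (-1) = exp(i pi / d). *)
Definition stellar_lambda d (j : 'I_d) : C :=
  (d.-root (-1 : C)) ^ (d%:Z - (2 * j + 1)%N%:Z).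

Definition stellar_unitary d (W : 'M[C]_d) : Prop :=
  W *m adjmx W = 1%:M /\ char_poly W = \prod_(j < d) ('X - (stellar_lambda j)%:P).

Definition mirror_overlap dA dB (psi : 'cV[C]_(dA * dB)) (W : 'M[C]_dA) : C :=
  (adjmx psi *m kron W 1%:M *m psi) 0 0.

(* stellar_mirror_ent psi e  <->  E_star(psi) = e, i.e.
   max_W |<psi|(W (x) 1)|psi>|^2 exists (is attained) and equals 1 - e *)
Definition stellar_mirror_ent dA dB (psi : 'cV[C]_(dA * dB)) (e : C) : Prop :=
  (exists W : 'M[C]_dA, stellar_unitary W /\ `|mirror_overlap psi W| ^+ 2 = 1 - e)
  /\ (forall W : 'M[C]_dA, stellar_unitary W -> `|mirror_overlap psi W| ^+ 2 <= 1 - e).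

Definition linear_entropy d (p : 'I_d -> C) : C :=
  (d%:R / (d.-1)%:R) * (1 - \sum_(i < d) p i ^+ 2).

End Defs.
Arguments stellar_lambda {C d} j.

(* Diagonalize rho = Tr_B |psi><psi| = P^* diag(D) P and a stellar unitary
   W = Q^* diag(E) Q.  Then <psi|W (x) 1|psi> = tr (rho W)
   = sum_ij D_i |U_ij|^2 E_j with U = P Q^* unitary, so |U_ij|^2 is doubly
   stochastic.  A rearrangement inequality for doubly stochastic arrays (by
   induction, deleting a maximal row and column) shows that 1 - E_star is the
   largest |sum_i lambda_i p_(s i)|^2 over permutations s; each is attained
   with Q = P.  As |lambda_i| = 1 and sum_i lambda_i = 0, the average of these
   squares over s is 1 - E_L, whence E_star = E_L iff they all coincide.  For
   d <= 3 all lambda_i conj(lambda_k), i <> k, have the same real part, making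
   the squares symmetric in p.  The file proves, in this order: the
   rearrangement inequality, the permutation average, properties of the
   stellar spectrum, the reduced-state identities, and the stellar overlaps;
   the theorem comes last. *)

From HB Require Import structures.
From mathcomp Require Import all_boot all_order all_fingroup all_algebra.
From mathcomp Require Import ring zify.
Import Order.TTheory GRing.Theory Num.Theory.
Local Open Scope ring_scope.

Section DoublyStochastic.
Context {R : numFieldType}.

Definition doubly_stochastic {n} (B : 'I_n -> 'I_n -> R) : Prop :=
  [/\ forall i j, 0 <= B i j, forall i, \sum_j B i j = 1 & forall j, \sum_i B i j = 1].

Lemma real_argmax {n} {a : 'I_n.+1 -> R} :
  (forall i, a i \is Num.real) -> exists i0, forall i, a i <= a i0.
Proof.
elim: n a => [|n IH] a ra; first by exists ord0 => i; rewrite ord1.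
have [k max_k] := IH (fun k => a (lift ord0 k)) (fun k => ra _).
have [le_0k|lt_k0] := real_leP (ra ord0) (ra (lift ord0 k)).
- exists (lift ord0 k) => i; case: (unliftP ord0 i) => [j ->|->] //.
- exists ord0 => i; case: (unliftP ord0 i) => [j ->|->] //.
  exact: le_trans (max_k j) (ltW lt_k0).
Qed.

Lemma perm_doubly_stochastic {n} (s : 'S_n) :
  doubly_stochastic (fun i j => (s i == j)%:R).
Proof.
split=> [i j|i|j]; first by rewrite ler0n.
- by rewrite (bigD1 (s i)) //= eqxx big1 ?addr0 // => j; rewrite eq_sym => /negbTE->.
- rewrite (bigD1 ((s^-1)%g j)) //= permKV eqxx big1 ?addr0 // => i ne_i.
  by apply/eqP; rewrite pnatr_eq0 eqb0; apply: contra ne_i => /eqP <-; rewrite permK.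
Qed.

Lemma perm_bilinear {n} (a b : 'I_n -> R) (s : 'S_n) :
  \sum_i \sum_j a i * (s i == j)%:R * b j = \sum_i a i * b (s i).
Proof.
apply: eq_bigr => i _; rewrite (bigD1 (s i)) //= eqxx mulr1 big1 ?addr0 //.
by move=> j /negbTE ne_j; rewrite eq_sym ne_j mulr0 mul0r.
Qed.

Lemma bilinear_shift {n} {a b : 'I_n -> R} {B : 'I_n -> 'I_n -> R} (a0 b0 : R) :
  doubly_stochastic B ->
  \sum_i \sum_j a i * B i j * b j =
  a0 * \sum_j b j + b0 * \sum_i a i - a0 * b0 * n%:R +
  \sum_i \sum_j (a0 - a i) * B i j * (b0 - b j).
Proof.
case=> _ rowB colB; pose c i := \sum_j B i j * b j.
have lhsE : \sum_i \sum_j a i * B i j * b j = \sum_i a i * c i.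
  by apply: eq_bigr => i _; rewrite mulr_sumr; apply: eq_bigr => j _; rewrite mulrA.
have sum_c : \sum_i c i = \sum_j b j.
  by rewrite exchange_big; apply: eq_bigr => j _; rewrite -mulr_suml colB mul1r.
have inner i : \sum_j (a0 - a i) * B i j * (b0 - b j) = (a0 - a i) * (b0 - c i).
  rewrite -[b0 in RHS]mulr1 -(rowB i) /c mulr_sumr -sumrB mulr_sumr.
  by apply: eq_bigr => j _; ring.
rewrite lhsE (eq_bigr _ (fun i _ => inner i)).
have -> : \sum_i (a0 - a i) * (b0 - c i) =
    \sum_i (a0 * b0 - a0 * c i - b0 * a i + a i * c i).
  by apply: eq_bigr => i _; ring.
rewrite big_split !sumrB /= -!mulr_sumr sum_c sumr_const card_ord -mulr_natr.
ring.
Qed.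

(* A nonnegative array whose row and column sums are at most 1 is dominated
   entrywise by a doubly stochastic one: add u_i v_j / S, where u, v are the
   row and column deficits and S their common total. *)
Lemma substochastic_completion n (B : 'I_n -> 'I_n -> R) :
  (forall i j, 0 <= B i j) ->
  (forall i, \sum_j B i j <= 1) -> (forall j, \sum_i B i j <= 1) ->
  exists2 B' : 'I_n -> 'I_n -> R,
    doubly_stochastic B' & forall i j, B i j <= B' i j.
Proof.
move=> B_ge0 rowB colB.
pose u i := 1 - \sum_j B i j; pose v j := 1 - \sum_i B i j.
have u_ge0 i : 0 <= u i by rewrite subr_ge0.
have v_ge0 j : 0 <= v j by rewrite subr_ge0.
pose S := \sum_i u i.
have sum_v : \sum_j v j = S by rewrite /S !sumrB exchange_big.
have S_ge0 : 0 <= S by apply: sumr_ge0.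
(* a nonnegative deficit vector with total S is unchanged by the factor S/S:
   if S vanishes, so does each of its entries *)
have keep (f : 'I_n -> R) : (forall i, 0 <= f i) -> \sum_i f i = S ->
    forall i, f i * (S / S) = f i.
  move=> f_ge0 sum_f i; have [S0|/divff->] := eqVneq S 0; last by rewrite mulr1.
  move/eqP: S0; rewrite -sum_f psumr_eq0 // => /allP/(_ i (mem_index_enum _))/eqP->.
  by rewrite mul0r.
exists (fun i j => B i j + u i * v j / S); last first.
  by move=> i j; rewrite lerDl divr_ge0 ?mulr_ge0.
split=> [i j|i|j]; first by rewrite addr_ge0 ?divr_ge0 ?mulr_ge0.
- rewrite big_split /= -mulr_suml -mulr_sumr sum_v -mulrA keep //.
  by rewrite /u addrC subrK.
- rewrite big_split /= -!mulr_suml -/S mulrAC [_ / S * _]mulrC keep //.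
  by rewrite /v addrC subrK.
Qed.

Lemma doubly_stochastic_minor {n} {B : 'I_n.+1 -> 'I_n.+1 -> R} i0 j0 :
  doubly_stochastic B ->
  exists2 B' : 'I_n -> 'I_n -> R, doubly_stochastic B' &
    forall k l, B (lift i0 k) (lift j0 l) <= B' k l.
Proof.
case=> B_ge0 rowB colB; apply: substochastic_completion => [k l|k|l] //.
- by rewrite -(rowB (lift i0 k)) (bigD1_ord j0) //= lerDr.
- by rewrite -(colB (lift j0 l)) (bigD1_ord i0) //= lerDr.
Qed.

(* Induction on
   n: after shifting a and b by their maxima, the maximal row and column carry
   zero weight and can be deleted. *)
Lemma doubly_stochastic_le_perm {n} {a b : 'I_n -> R} {B : 'I_n -> 'I_n -> R} :
  (forall i, a i \is Num.real) -> (forall j, b j \is Num.real) ->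
  doubly_stochastic B ->
  exists s : 'S_n, \sum_i \sum_j a i * B i j * b j <= \sum_i a i * b (s i).
Proof.
elim: n a b B => [|n IH] a b B ra rb dsB; first by exists 1%g; rewrite !big_ord0.
have [i0 max_a] := real_argmax ra; have [j0 max_b] := real_argmax rb.
pose al k := a i0 - a (lift i0 k); pose be l := b j0 - b (lift j0 l).
have [B' dsB' le_B'] := doubly_stochastic_minor i0 j0 dsB.
have [t le_t] := IH al be B' (fun k => rpredB (ra _) (ra _))
  (fun l => rpredB (rb _) (rb _)) dsB'.
exists (lift_perm i0 j0 t).
(* compare the shifted forms, in which row i0 and column j0 vanish *)
rewrite -perm_bilinear (bilinear_shift (a i0) (b j0) dsB).
rewrite (bilinear_shift (a i0) (b j0) (perm_doubly_stochastic _)).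
rewrite perm_bilinear lerD2l [X in _ <= X](bigD1_ord i0) //= subrr mul0r add0r.
rewrite (bigD1_ord i0) //= subrr big1 ?add0r => [|j _]; last by rewrite !mul0r.
under [X in X <= _]eq_bigr do rewrite (bigD1_ord j0) //= subrr mulr0 add0r.
under [X in _ <= X]eq_bigr do rewrite lift_perm_lift.
(* the minor is dominated by B', and al, be are nonnegative *)
apply: (le_trans _ le_t); apply: ler_sum => k _; apply: ler_sum => l _.
by rewrite ler_wpM2r ?ler_wpM2l ?subr_ge0 ?le_B'.
Qed.

End DoublyStochastic.

Section ComplexRearrangement.
Context {C : numClosedFieldType}.

Lemma unimodular_rotation (z : C) : exists2 u : C, `|u| = 1 & u * z = `|z|.
Proof.
have [->|z_neq0] := eqVneq z 0; first by exists 1; rewrite ?normr1 ?mulr0 ?normr0.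
have nz_neq0 : `|z| != 0 by rewrite normr_eq0.
exists (z^* / `|z|); first by rewrite normrM normfV normr_id norm_conjC divff.
by rewrite mulrAC [z^* * z]mulrC -normCK expr2 mulfK.
Qed.

(* Rotate the sum onto the real axis and apply
   the real inequality to the real parts. *)
Lemma doubly_stochastic_norm_le_perm {n} (a e : 'I_n -> C) {B : 'I_n -> 'I_n -> C} :
  (forall i, a i \is Num.real) -> doubly_stochastic B ->
  exists s : 'S_n, `|\sum_i \sum_j a i * B i j * e j| <= `|\sum_i a i * e (s i)|.
Proof.
move=> ra dsB; have B_real i j : B i j \is Num.real.
  by case: dsB => B_ge0 _ _; apply: ger0_real.
set z := \sum_i \sum_j _.
have [u norm_u uz] := unimodular_rotation z.
have [s le_s] := doubly_stochastic_le_perm (b := fun j => 'Re (u * e j)) ra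
  (fun _ => Creal_Re _) dsB.
exists s.
have Re_real (x : C) : x \is Num.real -> 'Re x = x by move/Creal_ReP.
rewrite -[`|z|]Re_real ?normr_real // -uz.
have -> : 'Re (u * z) = \sum_i \sum_j a i * B i j * 'Re (u * e j).
  rewrite /z mulr_sumr raddf_sum /=; apply: eq_bigr => i _.
  rewrite mulr_sumr raddf_sum /=; apply: eq_bigr => j _.
  by rewrite mulrCA (ReMl (rpredM (ra i) (B_real i j))).
apply: le_trans le_s _.
have -> : \sum_i a i * 'Re (u * e (s i)) = 'Re (u * \sum_i a i * e (s i)).
  rewrite mulr_sumr raddf_sum /=; apply: eq_bigr => i _.
  by rewrite mulrCA (ReMl (ra i)).
by rewrite -[X in _ <= X]mul1r -norm_u -normrM (leif_Re_Creal _).1.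
Qed.

End ComplexRearrangement.

Lemma sum_kronecker_split {R : comPzRingType} n (F : 'I_n -> 'I_n -> R) (alpha beta : R) :
  \sum_i \sum_k F i k * (alpha + beta * (i == k)%:R) =
  alpha * \sum_i \sum_k F i k + beta * \sum_i F i i.
Proof.
transitivity (\sum_i (alpha * \sum_k F i k + beta * F i i)).
  apply: eq_bigr => i _.
  rewrite (eq_bigr (fun k => alpha * F i k + beta * (F i k * (i == k)%:R))) => [|k _].
    rewrite big_split /= -!mulr_sumr [X in beta * X](bigD1 i) //= eqxx mulr1.
    rewrite [X in F i i + X]big1 ?addr0 //.
    by move=> k /negbTE ne_k; rewrite eq_sym ne_k mulr0.
  by ring.
by rewrite big_split /= -!mulr_sumr.
Qed.

Section SquaredNorms.
Context {C : numClosedFieldType}.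

Lemma sqnorm_sum_real n (lam x : 'I_n -> C) : (forall i, x i \is Num.real) ->
  `|\sum_i lam i * x i| ^+ 2 = \sum_i \sum_k lam i * (lam k)^* * (x i * x k).
Proof.
move=> rx; rewrite normCK rmorph_sum mulr_suml; apply: eq_bigr => i _.
rewrite mulr_sumr; apply: eq_bigr => k _.
by rewrite rmorphM /= (CrealP (rx k)); ring.
Qed.

Lemma sqnorm_sum_equiangular {n} (lam x : 'I_n -> C) (c : C) :
  (forall i, `|lam i| = 1) ->
  (forall i k, i != k -> 'Re (lam i * (lam k)^*) = c) ->
  (forall i, x i \is Num.real) ->
  `|\sum_i lam i * x i| ^+ 2 = c * (\sum_i x i) ^+ 2 + (1 - c) * \sum_i x i ^+ 2.
Proof.
move=> norm_lam Re_lam rx.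
have gram i k : 'Re (lam i * (lam k)^*) = c + (1 - c) * (i == k)%:R.
  have [<-|/Re_lam->] := eqVneq i k; last by rewrite mulr0 addr0.
  by rewrite /= mulr1n mulr1 addrC subrK -normCK norm_lam expr1n; apply/Creal_ReP/rpred1.
have Re_real (z : C) : z \is Num.real -> 'Re z = z by move/Creal_ReP.
rewrite -[LHS]Re_real ?rpredX ?normr_real // sqnorm_sum_real // raddf_sum /=.
rewrite (eq_bigr (fun i => \sum_k x i * x k * (c + (1 - c) * (i == k)%:R))) => [|i _].
  rewrite sum_kronecker_split; congr (c * _ + (1 - c) * _).
  by rewrite expr2 mulr_suml; apply: eq_bigr => i _; rewrite mulr_sumr.
rewrite raddf_sum /=; apply: eq_bigr => k _.
by rewrite (ReMr (rpredM (rx i) (rx k))) gram mulrC.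
Qed.

End SquaredNorms.

Lemma perm_pair_transitive {T : finType} (i k i' k' : T) :
  (i == k) = (i' == k') -> exists pi : {perm T}, pi i' = i /\ pi k' = k.
Proof.
have [<-|ne_ik'] := eqVneq i' k' => [/eqP <-|/negbT ne_ik].
  by exists (tperm i' i); rewrite tpermL.
pose k1 := tperm i' i k'.
have ne_ik1 : i != k1.
  by rewrite -[i](tpermL i' i) (inj_eq (@perm_inj _ _)).
exists (tperm i' i * tperm k1 k)%g; rewrite !permM -/k1 !tpermL; split=> //.
by apply: tpermD; rewrite eq_sym.
Qed.

Lemma sum_perm_pair {R : nmodType} {T : finType} (F : T -> T -> R) (i k i' k' : T) :
  (i == k) = (i' == k') ->
  \sum_(s : {perm T}) F (s i) (s k) = \sum_(s : {perm T}) F (s i') (s k').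
Proof.
case/perm_pair_transitive => pi [<- <-].
by rewrite [RHS](reindex_inj (mulgI pi)); apply: eq_bigr => s _; rewrite !permM.
Qed.

Section PermutationAverage.
Context {C : numClosedFieldType} {d : nat}.

Definition perm_moment (q : 'I_d -> C) (i k : 'I_d) : C :=
  \sum_(s : 'S_d) q (s i) * q (s k).

(* By 2-transitivity they only take two values: on and off the diagonal. *)
Lemma perm_moment_delta (q : 'I_d -> C) (i0 i1 : 'I_d) : i0 != i1 ->
  forall i k, perm_moment q i k = perm_moment q i0 i1 +
    (perm_moment q i0 i0 - perm_moment q i0 i1) * (i == k)%:R.
Proof.
move=> ne_i01 i k; have [<-|ne_ik] := eqVneq i k.
  rewrite /= mulr1n mulr1 addrC subrK.
  by apply: (sum_perm_pair (fun x y => q x * q y)); rewrite !eqxx.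
rewrite mulr0n mulr0 addr0.
by apply: (sum_perm_pair (fun x y => q x * q y)); rewrite (negbTE ne_ik) (negbTE ne_i01).
Qed.

Lemma sum_perm_moment_diag (q : 'I_d -> C) :
  \sum_i perm_moment q i i = #|{perm 'I_d}|%:R * \sum_i q i ^+ 2.
Proof.
rewrite exchange_big /= (eq_bigr (fun _ => \sum_i q i ^+ 2)) => [|s _].
  by rewrite sumr_const mulr_natl.
by rewrite [RHS](reindex_inj (@perm_inj _ s)).
Qed.

Lemma sum_perm_moment (q : 'I_d -> C) : \sum_i q i = 1 ->
  \sum_i \sum_k perm_moment q i k = #|{perm 'I_d}|%:R.
Proof.
move=> sum_q; rewrite (eq_bigr (fun i => \sum_(s : 'S_d) \sum_k q (s i) * q (s k))).
  rewrite exchange_big /= (eq_bigr (fun=> 1)) ?sumr_const // => s _.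
  have sum_qs : \sum_i q (s i) = 1 by rewrite -sum_q [RHS](reindex_inj (@perm_inj _ s)).
  by under eq_bigr do rewrite -mulr_sumr sum_qs mulr1.
by move=> i _; rewrite exchange_big.
Qed.

Lemma sum_perm_sqnorm_moment (lam q : 'I_d -> C) : (forall i, q i \is Num.real) ->
  \sum_(s : 'S_d) `|\sum_i lam i * q (s i)| ^+ 2 =
  \sum_i \sum_k lam i * (lam k)^* * perm_moment q i k.
Proof.
move=> rq; under eq_bigr do rewrite sqnorm_sum_real //.
rewrite exchange_big; apply: eq_bigr => i _.
by rewrite exchange_big; apply: eq_bigr => k _; rewrite mulr_sumr.
Qed.

Lemma sum_perm_sqnorm (lam q : 'I_d -> C) : (1 < d)%N ->
  (forall i, `|lam i| = 1) -> \sum_i lam i = 0 ->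
  (forall i, q i \is Num.real) -> \sum_i q i = 1 ->
  \sum_(s : 'S_d) `|\sum_i lam i * q (s i)| ^+ 2 =
  #|{perm 'I_d}|%:R * (1 - linear_entropy q).
Proof.
move=> d_gt1 norm_lam sum_lam rq sum_q.
pose i0 : 'I_d := Ordinal (ltnW d_gt1); pose i1 : 'I_d := Ordinal d_gt1.
have moment_delta := @perm_moment_delta q i0 i1 isT.
set t1 := perm_moment q i0 i0 in moment_delta.
set t2 := perm_moment q i0 i1 in moment_delta.
set N : C := #|{perm 'I_d}|%:R.
have diag : d%:R * t1 = N * \sum_i q i ^+ 2.
  rewrite -sum_perm_moment_diag (eq_bigr (fun _ => t1)) => [|i _].
    by rewrite sumr_const card_ord mulr_natl.
  by rewrite moment_delta eqxx mulr1 addrC subrK.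
have total : d%:R * d%:R * t2 + d%:R * (t1 - t2) = N.
  rewrite -[N](sum_perm_moment q sum_q); under [RHS]eq_bigr do under eq_bigr do
    rewrite moment_delta -[t2 + _]mul1r.
  by rewrite sum_kronecker_split !sumr_const card_ord !mulr_natl; ring.
have cross : \sum_i \sum_k lam i * (lam k)^* = 0.
  transitivity ((\sum_i lam i) * (\sum_k lam k)^*); last by rewrite sum_lam mul0r.
  by rewrite rmorph_sum mulr_suml; apply: eq_bigr => i _; rewrite mulr_sumr.
have norms : \sum_i lam i * (lam i)^* = d%:R.
  rewrite (eq_bigr (fun=> 1)) => [|i _]; first by rewrite sumr_const card_ord.
  by rewrite -normCK norm_lam expr1n.
rewrite sum_perm_sqnorm_moment //.
under eq_bigr do under eq_bigr do rewrite moment_delta.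
rewrite sum_kronecker_split cross norms mulr0 add0r.
have dm1 : (d.-1)%:R = d%:R - 1 :> C.
  by rewrite -[in RHS](prednK (ltnW d_gt1)) -natr1 addrK.
have dm1_neq0 : (d.-1)%:R != 0 :> C by rewrite pnatr_eq0 -lt0n -ltnS prednK // ltnW.
apply: (mulfI dm1_neq0).
have -> : (d.-1)%:R * (N * (1 - linear_entropy q)) = d%:R * (N * \sum_i q i ^+ 2) - N.
  by rewrite /linear_entropy dm1; field; rewrite -dm1.
by rewrite -diag -total dm1; ring.
Qed.

End PermutationAverage.

Section StellarSpectrum.
Context {C : numClosedFieldType} {d : nat}.
Hypothesis d_ge2 : (2 <= d)%N.

(* w = exp(i pi / d) is a d-th root of -1; the stellar spectrum is the
   geometric progression lambda_j = w^(d-1) zeta^j of ratio zeta = w^-2,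
   a primitive d-th root of unity. *)
Let w : C := d.-root (-1).
Let zeta : C := (w ^+ 2)^-1.

Let d_gt0 : (0 < d)%N. Proof. exact: ltnW. Qed.

Let w_exp_d : w ^+ d = -1. Proof. exact: rootCK. Qed.

Let norm_w : `|w| = 1.
Proof. by rewrite norm_rootC normrN1 rootC1. Qed.

Let norm_zeta : `|zeta| = 1.
Proof. by rewrite normfV normrX norm_w expr1n invr1. Qed.

Let zeta_exp_d : zeta ^+ d = 1.
Proof. by rewrite exprVn -exprM mulnC exprM w_exp_d sqrrN expr1n invr1. Qed.

Let zeta_neq1 : zeta != 1.
Proof.
rewrite invr_eq1 -subr_eq0 subr_sqr_1 mulf_eq0 subr_eq0 addr_eq0 negb_or.
apply/andP; split; apply/eqP => w_eq.
  by move: w_exp_d; rewrite w_eq expr1n => /eqP; rewrite -addr_eq0 -mulr2n pnatr_eq0.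
by have := rootC_lt0 (-1 : C) (d_ge2 : (1 < d)%N); rewrite -/w w_eq ltrN10.
Qed.

Let conj_zeta : zeta^* = zeta ^+ d.-1.
Proof.
apply: (mulfI (_ : zeta != 0)); first by rewrite -normr_eq0 norm_zeta oner_neq0.
by rewrite -normCK norm_zeta expr1n -exprS prednK.
Qed.

Let stellar_lambdaE (j : 'I_d) : stellar_lambda j = w ^+ d.-1 * zeta ^+ j.
Proof.
have w_neq0 : w != 0 by rewrite -normr_eq0 norm_w oner_neq0.
rewrite /stellar_lambda -/w.
have -> : (d%:Z - (2 * j + 1)%N%:Z = (d.-1)%:Z + - (2 * j)%N%:Z)%R.
  by have := ltn_ord j; lia.
by rewrite expfzDr // -exprnN /zeta exprVn -exprM.
Qed.

Lemma norm_stellar_lambda (j : 'I_d) : `|stellar_lambda j : C| = 1.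
Proof. by rewrite stellar_lambdaE normrM !normrX norm_w norm_zeta !expr1n mulr1. Qed.

Lemma sum_stellar_lambda : \sum_(j < d) (stellar_lambda j : C) = 0.
Proof.
under eq_bigr do rewrite stellar_lambdaE.
rewrite -mulr_sumr; apply/eqP; rewrite mulf_eq0; apply/orP; right.
have := subrX1 zeta d; rewrite zeta_exp_d subrr => /esym/eqP.
by rewrite mulf_eq0 subr_eq0 (negbTE zeta_neq1).
Qed.

Let stellar_gram (i k : 'I_d) :
  stellar_lambda i * (stellar_lambda k)^* = zeta ^+ ((i + d.-1 * k) %% d).
Proof.
rewrite expr_mod // !stellar_lambdaE rmorphM !rmorphXn /= conj_zeta -exprM.
by rewrite mulrACA -rmorphXn -normCK normrX norm_w !expr1n mul1r exprD.
Qed.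

(* For d <= 3 every pair of distinct stellar eigenvalues spans the same angle,
   so all the products lambda_i conj(lambda_k), i <> k, have the same real
   part. *)
Lemma stellar_equiangular : (d <= 3)%N -> exists c : C,
  forall i k : 'I_d, i != k -> 'Re (stellar_lambda i * (stellar_lambda k)^*) = c.
Proof.
move=> d_le3; exists ('Re zeta) => i k ne_ik; rewrite stellar_gram.
have : ((i + d.-1 * k) %% d \in [:: 1; d.-1])%N.
  case: i k ne_ik => [i lt_i] [k lt_k]; rewrite -val_eqE /=.
  have [d2|d3] : d = 2 \/ d = 3 by lia.
    by rewrite d2 in lt_i lt_k *; case: i k lt_i lt_k => [|[|i]] [|[|k]].
  by rewrite d3 in lt_i lt_k *; case: i k lt_i lt_k => [|[|[|i]]] [|[|[|k]]].
by rewrite !inE => /orP[] /eqP->; rewrite ?expr1 // -conj_zeta Re_conj.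
Qed.

End StellarSpectrum.

Section ReducedState.
Context {C : numClosedFieldType} {dA dB : nat}.
Local Open Scope sesquilinear_scope.

Lemma adjmxE m n (A : 'M[C]_(m, n)) : adjmx A = A ^t*.
Proof. by apply/matrixP => i j; rewrite !mxE. Qed.

Lemma idx_pairK (i : 'I_dA) (j : 'I_dB) : idx_pair (mxvec_index i j) = (i, j).
Proof. by rewrite /idx_pair /mxvec_index cast_ordK enum_rankK. Qed.

Lemma sum_mxvec_index (F : 'I_(dA * dB) -> C) :
  \sum_k F k = \sum_i \sum_j F (mxvec_index i j).
Proof.
rewrite pair_bigA (reindex (fun p : 'I_dA * 'I_dB => mxvec_index p.1 p.2)) //.
exists (@idx_pair dA dB) => [[i j] _|k _]; first by rewrite idx_pairK.
by case/mxvec_indexP: k => i j; rewrite idx_pairK.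
Qed.

Definition coef_mx (psi : 'cV[C]_(dA * dB)) : 'M[C]_(dA, dB) :=
  \matrix_(i, j) psi (mxvec_index i j) 0.

Lemma rhoAE (psi : 'cV[C]_(dA * dB)) : rhoA psi = coef_mx psi *m (coef_mx psi) ^t*.
Proof.
apply/matrixP => i i'; rewrite !mxE; apply: eq_bigr => j _.
by rewrite !mxE big_ord1 !mxE.
Qed.

Lemma rhoA_hermitian (psi : 'cV[C]_(dA * dB)) : rhoA psi \is hermsymmx.
Proof. by apply/is_hermitianmxP; rewrite expr0 scale1r rhoAE trmx_mul map_mxM trmxCK. Qed.

Lemma mirror_overlapE (psi : 'cV[C]_(dA * dB)) (W : 'M[C]_dA) :
  mirror_overlap psi W = \tr (rhoA psi *m W).
Proof.
rewrite /mirror_overlap /mxtrace mxE sum_mxvec_index; apply: eq_bigr => i _.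
rewrite [RHS]mxE; under [RHS]eq_bigr do rewrite rhoAE mxE mulr_suml.
rewrite exchange_big; apply: eq_bigr => j _.
rewrite mxE sum_mxvec_index mulr_suml; apply: eq_bigr => i' _.
rewrite mulr_suml (bigD1 j) //= big1 ?addr0 => [|j' ne_j]; rewrite !mxE !idx_pairK /=.
  by rewrite eqxx mulr1n mulr1; ring.
by rewrite (negbTE ne_j) mulr0n !mulr0 mul0r.
Qed.

Lemma unit_vec_trace {psi : 'cV[C]_(dA * dB)} : unit_vec psi -> \tr (rhoA psi) = 1.
Proof.
rewrite /unit_vec mxE sum_mxvec_index => <-; apply: eq_bigr => i _.
by rewrite rhoAE mxE; apply: eq_bigr => j _; rewrite !mxE mulrC.
Qed.

End ReducedState.

Lemma char_poly_conj {R : comNzRingType} n (P Q A : 'M[R]_n) :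
  Q *m P = 1%:M -> char_poly (Q *m A *m P) = char_poly A.
Proof.
move=> QP; pose Pp := map_mx polyC P; pose Qp := map_mx polyC Q.
have QPp : Qp *m Pp = 1%:M by rewrite -map_mxM QP map_mx1.
rewrite /char_poly; have -> : char_poly_mx (Q *m A *m P) = Qp *m char_poly_mx A *m Pp.
  rewrite /char_poly_mx !map_mxM mulmxBr mulmxBl -/Pp -/Qp; congr (_ - _).
  by rewrite -mulmxA -scalar_mxC mulmxA QPp mul1mx.
by rewrite !det_mulmx mulrAC -det_mulmx QPp det1 mul1r.
Qed.

Lemma char_poly_diag {R : comNzRingType} n (D : 'rV[R]_n) :
  char_poly (diag_mx D) = \prod_i ('X - (D 0 i)%:P).
Proof.
rewrite char_poly_trig ?diag_mx_is_trig //; apply: eq_bigr => i _.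
by rewrite mxE eqxx mulr1n.
Qed.

Lemma prod_XsubC_perm {F : fieldType} n (a b : 'I_n -> F) :
  \prod_i ('X - (a i)%:P) = \prod_i ('X - (b i)%:P) ->
  exists tau : 'S_n, forall i, a i = b (tau i).
Proof.
move=> eq_prod.
have /tuple_permP[tau tauE] : perm_eq [tuple a i | i < n] [tuple b i | i < n].
  by apply: prod_XsubC_eq; rewrite !big_tuple; under eq_bigr do rewrite tnth_mktuple;
    under [RHS]eq_bigr do rewrite tnth_mktuple.
exists tau => i; have := congr1 (fun s => nth 0 s i) tauE.
by rewrite !nth_mktuple tnth_mktuple.
Qed.

Section Unitary.
Context {C : numClosedFieldType}.
Local Open Scope sesquilinear_scope.

Lemma normalmx_spectral {n} {A : 'M[C]_n} : A \is normalmx ->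
  A = (spectralmx A) ^t* *m diag_mx (spectral_diag A) *m spectralmx A.
Proof.
by move/orthomx_spectralP => {1}->; rewrite invmx_unitary // spectral_unitarymx.
Qed.

Lemma unitarymx_normal {n} {U : 'M[C]_n} : U \is unitarymx -> U \is normalmx.
Proof.
by move=> /unitarymxP UU; apply/normalmxP; rewrite UU; apply/esym/mulmx1C.
Qed.

Lemma unitary_doubly_stochastic {n} {U : 'M[C]_n} : U \is unitarymx ->
  doubly_stochastic (fun i j => U i j * (U i j)^*).
Proof.
move=> /unitarymxP UU; have UtU : U ^t* *m U = 1%:M by apply: mulmx1C.
split=> [i j|i|j]; first exact: mul_conjC_ge0.
  have /matrixP/(_ i i) := UU; rewrite !mxE eqxx mulr1n => <-.
  by apply: eq_bigr => j _; rewrite !mxE.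
have /matrixP/(_ j j) := UtU; rewrite !mxE eqxx mulr1n => <-.
by apply: eq_bigr => i _; rewrite !mxE mulrC.
Qed.

Lemma trace_conj_diag n (P Q : 'M[C]_n) (D E : 'rV[C]_n) :
  \tr ((P ^t* *m diag_mx D *m P) *m (Q ^t* *m diag_mx E *m Q)) =
  \sum_i \sum_j D 0 i * ((P *m Q ^t*) i j * ((P *m Q ^t*) i j)^*) * E 0 j.
Proof.
set U := P *m Q ^t*.
rewrite -!mulmxA mxtrace_mulC.
have -> : diag_mx D *m (P *m (Q ^t* *m (diag_mx E *m Q))) *m P ^t* =
          diag_mx D *m U *m diag_mx E *m U ^t*.
  by rewrite /U trmx_mul map_mxM trmxCK !mulmxA.
rewrite /mxtrace; apply: eq_bigr => i _; rewrite mxE; apply: eq_bigr => j _.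
by rewrite mul_mx_diag mul_diag_mx !mxE; ring.
Qed.

Lemma unitary_conj_diag n (P : 'M[C]_n) (e : 'rV[C]_n) :
  P \is unitarymx -> (forall i, `|e 0 i| = 1) ->
  P ^t* *m diag_mx e *m P \is unitarymx.
Proof.
move=> uP norm_e; have ue : diag_mx e \is unitarymx.
  apply/unitarymxP/matrixP => i j.
  rewrite tr_diag_mx map_diag_mx mul_mx_diag !mxE.
  have [<-|ne_ij] := eqVneq i j; last by rewrite mulr0n mul0r.
  by rewrite !mulr1n -normCK norm_e expr1n.
by rewrite !mul_unitarymx ?trmxC_unitary.
Qed.

End Unitary.

Lemma sum_pairing_perm {R : comPzRingType} n (f g : 'I_n -> R) (s : 'S_n) :
  \sum_i f i * g (s i) = \sum_i g i * f ((s^-1)%g i).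
Proof.
rewrite [RHS](reindex_inj (@perm_inj _ s)).
by apply: eq_bigr => i _; rewrite permK mulrC.
Qed.

(* |sum_i lambda_i p_(s i)|: the overlap reached by the stellar unitary that is
   diagonal in an eigenbasis of rho_A, with eigenvalues matched by s. *)
Definition stellar_overlap {C : numClosedFieldType} {d} (p : 'I_d -> C) (s : 'S_d) : C :=
  `|\sum_i stellar_lambda i * p (s i)|.

Section StellarOverlaps.
Context {C : numClosedFieldType} {d dB : nat}.
Local Open Scope sesquilinear_scope.
Hypothesis d_ge2 : (2 <= d)%N.

Context {psi : 'cV[C]_(d * dB)} {P : 'M[C]_d} {D : 'rV[C]_d}.
Context {p : 'I_d -> C} {tau : 'S_d}.
Hypotheses (uP : P \is unitarymx) (rhoE : rhoA psi = P ^t* *m diag_mx D *m P).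
Hypotheses (D_real : forall i, D 0 i \is Num.real) (pE : forall i, p i = D 0 (tau i)).

Let PtP : P ^t* *m P = 1%:M. Proof. by apply: mulmx1C; apply/unitarymxP. Qed.

Lemma stellar_overlap_attained (s : 'S_d) : exists W : 'M[C]_d,
  stellar_unitary W /\ `|mirror_overlap psi W| = stellar_overlap p s.
Proof.
pose pi := ((s * tau)^-1)%g; pose e : 'rV[C]_d := \row_j stellar_lambda (pi j).
have norm_e j : `|e 0 j| = 1 by rewrite mxE norm_stellar_lambda.
exists (P ^t* *m diag_mx e *m P); split; first split.
- by rewrite adjmxE; apply/unitarymxP/unitary_conj_diag.
- rewrite char_poly_conj // char_poly_diag [RHS](reindex_inj (@perm_inj _ pi)).
  by apply: eq_bigr => j _; rewrite mxE.
rewrite mirror_overlapE rhoE trace_conj_diag (unitarymxP uP) /stellar_overlap.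
under [in RHS]eq_bigr do rewrite pE -permM.
rewrite sum_pairing_perm; congr `|_|; apply: eq_bigr => i _.
rewrite (bigD1 i) //= big1 => [|j ne_ji]; last first.
  by rewrite !mxE eq_sym (negbTE ne_ji) mulr0n mul0r mulr0 mul0r.
by rewrite !mxE eqxx mulr1n conjC1 !mulr1 addr0.
Qed.

(* ... and every stellar overlap is bounded by a permuted pairing: writing
   W = Q^* diag(E) Q, the overlap is a doubly stochastic combination. *)
Lemma stellar_overlap_bound (W : 'M[C]_d) : stellar_unitary W ->
  exists s : 'S_d, `|mirror_overlap psi W| <= stellar_overlap p s.
Proof.
case; rewrite adjmxE => /unitarymxP uW charW.
set Q := spectralmx W; set E := spectral_diag W.
have uQt : Q ^t* \is unitarymx by rewrite trmxC_unitary spectral_unitarymx.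
have WE := normalmx_spectral (unitarymx_normal uW).
have [sigma ES] : exists sigma : 'S_d, forall k, E 0 k = stellar_lambda (sigma k).
  apply: prod_XsubC_perm; rewrite -char_poly_diag -charW [in RHS]WE char_poly_conj //.
  by apply: mulmx1C; apply/unitarymxP/spectral_unitarymx.
have [s le_s] := doubly_stochastic_norm_le_perm (fun i => D 0 i) (fun j => E 0 j)
  D_real (unitary_doubly_stochastic (mul_unitarymx uP uQt)).
exists ((s * sigma)^-1 * tau^-1)%g.
rewrite mirror_overlapE rhoE WE trace_conj_diag; apply: (le_trans le_s).
under eq_bigr do rewrite ES -permM.
rewrite sum_pairing_perm /stellar_overlap.
by under [X in _ <= `|X|]eq_bigr do rewrite pE -permM mulgKV.
Qed.

End StellarOverlaps.

Lemma max_eq_mean_iff_const {R : numFieldType} {I : finType} (f : I -> R) (m : R) :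
  (0 < #|I|)%N -> \sum_i f i = #|I|%:R * m ->
  ((exists i, f i = m) /\ (forall i, f i <= m)) <-> (forall i j, f i = f j).
Proof.
move=> I_gt0 sum_f; split=> [[_ le_m] i j|f_const].
  suff eq_m k : f k = m by rewrite !eq_m.
  have /eqP : \sum_i (m - f i) = 0 by rewrite sumrB sum_f sumr_const mulr_natl subrr.
  rewrite psumr_eq0 => [/allP/(_ k (mem_index_enum _))|l _]; last by rewrite subr_ge0.
  by rewrite subr_eq0 => /eqP.
have [i0 _] := card_gt0P I_gt0.
have eq_m : f i0 = m.
  apply: (mulfI (_ : #|I|%:R != 0 :> R)); first by rewrite pnatr_eq0 -lt0n.
  rewrite -sum_f (eq_bigr (fun=> f i0)) => [|i _]; last exact: f_const.
  by rewrite sumr_const mulr_natl.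
by split=> [|i]; [exists i0 | rewrite (f_const i i0) eq_m].
Qed.

Section MainTheorem.
Context {C : numClosedFieldType} {d dB : nat}.
Local Open Scope sesquilinear_scope.
Hypothesis d_ge2 : (2 <= d)%N.
Context {psi : 'cV[C]_(d * dB)} {p : 'I_d -> C}.
Hypothesis rhoA_char : char_poly (rhoA psi) = \prod_i ('X - (p i)%:P).

Let P := spectralmx (rhoA psi).
Let D := spectral_diag (rhoA psi).
Let uP : P \is unitarymx. Proof. exact: spectral_unitarymx. Qed.
Let rhoE : rhoA psi = P ^t* *m diag_mx D *m P.
Proof. exact/normalmx_spectral/hermitian_normalmx/rhoA_hermitian. Qed.
Let D_real i : D 0 i \is Num.real.
Proof. exact/mxOverP/hermitian_spectral_diag_real/rhoA_hermitian. Qed.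

Let p_perm_D : exists tau : 'S_d, forall i, p i = D 0 (tau i).
Proof.
apply: prod_XsubC_perm; rewrite -rhoA_char -char_poly_diag rhoE char_poly_conj //.
by apply: mulmx1C; apply/unitarymxP.
Qed.

Lemma rhoA_eigenvalues_real i : p i \is Num.real.
Proof. by have [tau ->] := p_perm_D. Qed.

Lemma stellar_mirror_entP (e : C) : stellar_mirror_ent psi e <->
  (exists s, stellar_overlap p s ^+ 2 = 1 - e) /\
  (forall s, stellar_overlap p s ^+ 2 <= 1 - e).
Proof.
have [tau pE] := p_perm_D.
have attained := stellar_overlap_attained d_ge2 uP rhoE pE.
have bound := stellar_overlap_bound uP rhoE D_real pE.
have le_overlap W m : stellar_unitary W -> (forall s, stellar_overlap p s ^+ 2 <= m) ->
    `|mirror_overlap psi W| ^+ 2 <= m.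
  move=> /bound[s le_s] le_m; apply: le_trans (le_m s).
  by rewrite lerXn2r ?nnegrE ?normr_ge0.
split=> [[[W [sW eW]] le_W]|[[s es] le_s]].
  have le_s s : stellar_overlap p s ^+ 2 <= 1 - e.
    by have [W' [sW' <-]] := attained s; exact: le_W.
  have [s le_Ws] := bound W sW; split=> //; exists s.
  apply/eqP; rewrite eq_le le_s -eW lerXn2r ?nnegrE ?normr_ge0 //.
split=> [|W /le_overlap]; last exact.
by have [W [sW eW]] := attained s; exists W; rewrite eW.
Qed.

Lemma sum_stellar_overlap_sq : unit_vec psi ->
  \sum_(s : 'S_d) stellar_overlap p s ^+ 2 = #|{perm 'I_d}|%:R * (1 - linear_entropy p).
Proof.
move=> psi_unit; have [tau pE] := p_perm_D.
apply: sum_perm_sqnorm => //; [exact: norm_stellar_lambda | exact: sum_stellar_lambda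
  | exact: rhoA_eigenvalues_real | ].
rewrite -(unit_vec_trace psi_unit) rhoE mxtrace_mulC mulmxA (unitarymxP uP).
rewrite mul1mx mxtrace_diag [RHS](reindex_inj (@perm_inj _ tau)).
by apply: eq_bigr => i _; rewrite pE.
Qed.

Lemma stellar_mirror_ent_linear_entropy : unit_vec psi ->
  stellar_mirror_ent psi (linear_entropy p) <->
  (forall s t : 'S_d, stellar_overlap p s = stellar_overlap p t).
Proof.
move=> psi_unit; rewrite stellar_mirror_entP.
rewrite (max_eq_mean_iff_const _ _ _ (sum_stellar_overlap_sq psi_unit)); last first.
  by apply/card_gt0P; exists 1%g.
split=> eq_st s t; last by rewrite (eq_st s t).
by apply/eqP; rewrite -(eqrXn2 (_ : 0 < 2)%N) ?normr_ge0 // (eq_st s t).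
Qed.

(* Theorem (second part): for d <= 3 the pairwise angles of the stellar
   spectrum are equal, so |sum_i lambda_i p_(s i)|^2 is a symmetric function
   of p and all permuted pairings coincide. *)
Lemma stellar_overlap_const_small : (d <= 3)%N ->
  forall s t : 'S_d, stellar_overlap p s = stellar_overlap p t.
Proof.
move=> d_le3; have [c Re_c] := stellar_equiangular (C := C) d_ge2 d_le3.
have sq s : stellar_overlap p s ^+ 2 =
    c * (\sum_i p i) ^+ 2 + (1 - c) * \sum_i p i ^+ 2.
  rewrite /stellar_overlap (sqnorm_sum_equiangular _ _ _ (norm_stellar_lambda d_ge2) Re_c).
    by congr (c * _ ^+ 2 + (1 - c) * _); rewrite [RHS](reindex_inj (@perm_inj _ s)).
  by move=> i; exact: rhoA_eigenvalues_real.
by move=> s t; apply/eqP; rewrite -(eqrXn2 (_ : 0 < 2)%N) ?normr_ge0 // !sq.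
Qed.

End MainTheorem.

Theorem mainTheorem7 (C : numClosedFieldType) (dA dB : nat)
    (hdA : (2 <= dA)%N) (hAB : (dA <= dB)%N) :
  (forall (psi : 'cV[C]_(dA * dB)) (p : 'I_dA -> C),
     unit_vec psi ->
     char_poly (rhoA psi) = \prod_(i < dA) ('X - (p i)%:P) ->
     (stellar_mirror_ent psi (linear_entropy p) <->
      (forall s t : 'S_dA,
         `|\sum_(i < dA) stellar_lambda i * p (s i)|
         = `|\sum_(i < dA) stellar_lambda i * p (t i)|)))
  /\
  ((dA <= 3)%N ->
   forall (psi : 'cV[C]_(dA * dB)) (p : 'I_dA -> C),
     unit_vec psi ->
     char_poly (rhoA psi) = \prod_(i < dA) ('X - (p i)%:P) ->
     stellar_mirror_ent psi (linear_entropy p)).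
Proof.
split=> [psi p psi_unit rhoA_char | dA_le3 psi p psi_unit rhoA_char].
  exact: (stellar_mirror_ent_linear_entropy hdA rhoA_char psi_unit).
apply/(stellar_mirror_ent_linear_entropy hdA rhoA_char psi_unit).2.
exact: (stellar_overlap_const_small hdA rhoA_char dA_le3).
Qed.
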